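(* Let $h\ge 2$ and $k\ge 1$ be integers. Let $B'$ be a collection of $kh$ colored balls with exactly $h$ balls of color $i$ for each color $i\in[k]$. Let $C'\subseteq B'$ be obtained by keeping each ball independently with probability $\alpha\in[0,\frac{1}{2h}]$. Then the probability that all balls in $C'$ have distinct colors is at most $\exp(-kh(h-1)\alpha^2/4)$. *)

From HB Require Import structures.
From mathcomp Require Import all_boot all_order all_algebra.
From mathcomp Require Import reals.
From mathcomp Require Import sequences exp.
Set Implicit Arguments. Unset Strict Implicit. Unset Printing Implicit Defensive.
Import Order.TTheory GRing.Theory Num.Theory.
Local Open Scope ring_scope.

(* The ball collection B' is modelled as 'I_k * 'I_h : ball (i, j) is the
   j-th ball of color i, so there are exactly h balls of each color i in [k]. *)
Definition balls (k h : nat) := ('I_k * 'I_h)%type.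

(* Probability that the random subset C' (each ball kept independently with
   probability a) equals the given subset S. *)
Definition keep_prob {R : realType} {T : finType} (a : R) (S : {set T}) : R :=
  a ^+ #|S| * (1 - a) ^+ (#|T| - #|S|).

Definition distinct_colors (k h : nat) (C : {set balls k h}) : bool :=
  [forall x in C, forall y in C, (x.1 == y.1) ==> (x == y)].

Definition prob_distinct {R : realType} (k h : nat) (a : R) : R :=
  \sum_(C : {set balls k h} | distinct_colors C) keep_prob a C.

(* Colors are independent, so the probability of seeing each color at most
   once is the k-th power of the probability q that at most one of the h balls
   of a given color survives: q = (1 - a)^(h-1) (1 + (h-1) a).  Going from n to
   n + 1 balls lowers (1 - a)^n (1 + n a) by exactly (n + 1) a^2 (1 - a)^n,
   which is at least (n + 1) a^2 / 2 by Bernoulli's inequality as long as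
   n a <= 1/2; summing gives q <= 1 - h (h - 1) a^2 / 4 <= exp (-h (h - 1) a^2 / 4). *)

From HB Require Import structures.
From mathcomp Require Import all_boot all_order all_algebra.
From mathcomp Require Import reals.
From mathcomp Require Import sequences exp.
From mathcomp Require Import ring lra.
Set Implicit Arguments. Unset Strict Implicit. Unset Printing Implicit Defensive.
Import Order.TTheory GRing.Theory Num.Theory.
Local Open Scope ring_scope.

Definition fiber (I J : finType) (C : {set I * J}) (i : I) : {set J} :=
  [set j | (i, j) \in C].

Lemma distinct_colorsE k h (C : {set balls k h}) :
  distinct_colors C = [forall i, #|fiber C i| <= 1]%N.
Proof.
apply/forall_inP/forallP => [dC i | fiber_le1 [i j] iC].
  apply/card_le1_eqP => j j'; rewrite !inE => ijC ij'C.
  by have /forall_inP/(_ _ ij'C)/implyP/(_ (eqxx i))/eqP[] := dC _ ijC.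
apply/forall_inP => -[i' j'] i'C; apply/implyP => /= /eqP i_eq.
move: i'C; rewrite -{}i_eq => ij'C.
have /card_le1_eqP/(_ j j') := fiber_le1 i.
by rewrite !inE => /(_ iC ij'C) ->.
Qed.

Section KeepProb.
Variable R : realType.
Implicit Types a : R.

Lemma keep_probE (T : finType) a (S : {set T}) :
  keep_prob a S = \prod_(t : T) (if t \in S then a else 1 - a).
Proof.
rewrite big_if /= !prodr_const; congr (_ ^+ _ * _ ^+ _).
by rewrite -(cardC S) addKn.
Qed.

Lemma keep_prob_fibers (I J : finType) a (C : {set I * J}) :
  keep_prob a C = \prod_(i : I) keep_prob a (fiber C i).
Proof.
under [RHS]eq_bigr do rewrite keep_probE.
by rewrite keep_probE pair_bigA; apply: eq_bigr => -[i j] _; rewrite inE.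
Qed.

Lemma sum_keep_prob_fibers (I J : finType) a (P : pred {set J}) :
  \sum_(C : {set I * J} | [forall i, P (fiber C i)]) keep_prob a C =
  (\sum_(S : {set J} | P S) keep_prob a S) ^+ #|I|.
Proof.
pose glue (f : {ffun I -> {set J}}) := [set x : I * J | x.2 \in f x.1].
have fiber_glue f i : fiber (glue f) i = f i by apply/setP => j; rewrite !inE.
have glue_bij : bijective glue.
  exists (fun C => [ffun i => fiber C i]) => [f | C].
    by apply/ffunP => i; rewrite ffunE fiber_glue.
  by apply/setP => -[i j]; rewrite !inE ffunE inE.
rewrite (reindex glue) /=; last exact: onW_bij.
rewrite -prodr_const bigA_distr_big; apply: eq_big => [f | f _].
  by apply: eq_forallb => i; rewrite fiber_glue.
by rewrite keep_prob_fibers; apply: eq_bigr => i _; rewrite fiber_glue.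
Qed.

Lemma sum_keep_prob_card_le1 (T : finType) a :
  \sum_(S : {set T} | (#|S| <= 1)%N) keep_prob a S =
  (1 - a) ^+ #|T| + #|T|%:R * (a * (1 - a) ^+ #|T|.-1).
Proof.
rewrite (bigD1 set0) ?cards0 //= {1}/keep_prob cards0 expr0 mul1r subn0.
congr (_ + _).
have card_singletons : #|[set S : {set T} | #|S| == 1%N]| = #|T|.
  by rewrite card_draws bin1.
rewrite mulr_natl -[X in _ *+ X]card_singletons -sumr_const.
rewrite big_mkcond [RHS]big_mkcond; apply: eq_bigr => S _.
rewrite inE /keep_prob -cards_eq0.
by case: #|S| => [|[|n]] //=; rewrite expr1 subn1.
Qed.

Lemma prob_distinctE k h a :
  prob_distinct k h a = ((1 - a) ^+ h + h%:R * (a * (1 - a) ^+ h.-1)) ^+ k.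
Proof.
rewrite /prob_distinct (eq_bigl _ _ (@distinct_colorsE k h)).
rewrite (sum_keep_prob_fibers _ a (fun S : {set 'I_h} => #|S| <= 1)%N).
by rewrite sum_keep_prob_card_le1 !card_ord.
Qed.

End KeepProb.

Section RealBounds.
Variable R : realType.
Implicit Types a : R.

Lemma bernoulli_ineq a n : 0 <= a <= 1 -> 1 - n%:R * a <= (1 - a) ^+ n.
Proof.
move=> /andP[a_ge0 a_le1]; elim: n => [|n IH]; first by rewrite mul0r subr0.
have : (1 - n%:R * a) * (1 - a) <= (1 - a) ^+ n * (1 - a).
  by apply: ler_wpM2r; lra.
have : 0 <= n%:R :> R by [].
rewrite exprSr -natr1; nra.
Qed.

Lemma le_prob_at_most_one a n : 0 <= a -> n%:R * a <= 1 / 2 ->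
  (1 - a) ^+ n * (1 + n%:R * a) <= 1 - n%:R * (n%:R + 1) * a ^+ 2 / 4.
Proof.
move=> a_ge0; elim: n => [|n IH]; first by rewrite !mul0r expr0; lra.
rewrite -natr1 => Sn_a.
have n_ge0 : 0 <= n%:R :> R by [].
have step : (1 - a) ^+ n.+1 * (1 + (n%:R + 1) * a) =
    (1 - a) ^+ n * (1 + n%:R * a) - (n%:R + 1) * a ^+ 2 * (1 - a) ^+ n.
  by rewrite exprSr; ring.
have half_le : 1 / 2 <= (1 - a) ^+ n.
  by apply: le_trans (bernoulli_ineq n _); [lra | apply/andP; split; nra].
have decrement : (n%:R + 1) * a ^+ 2 / 2 <= (n%:R + 1) * a ^+ 2 * (1 - a) ^+ n.
  by apply: ler_wpM2l; [apply: mulr_ge0; [lra | exact: sqr_ge0] | lra].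
have n_a : n%:R * a <= 1 / 2 by nra.
by rewrite step; have := IH n_a; lra.
Qed.

End RealBounds.

Theorem lemma3p7 (R : realType) (h k : nat) (a : R)
  (hh : (2 <= h)%N) (hk : (1 <= k)%N)
  (ha0 : 0 <= a) (ha1 : a <= ((2 * h)%:R)^-1) :
  prob_distinct k h a <=
  expR (- ((k * h * (h - 1))%:R * a ^+ 2 / 4)).
Proof.
case: h hh ha1 => [|n] // _ ha1; rewrite subn1 /=.
set y := n%:R * (n%:R + 1) * a ^+ 2 / 4.
have two_n_a : 2 * (n%:R + 1) * a <= 1.
  move: ha1; rewrite -div1r ler_pdivlMr ?ltr0n ?muln_gt0 // natrM -natr1; lra.
have n_ge0 : 0 <= n%:R :> R by [].
have q_eq : (1 - a) ^+ n.+1 + n.+1%:R * (a * (1 - a) ^+ n) =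
    (1 - a) ^+ n * (1 + n%:R * a) by rewrite exprSr -natr1; ring.
have q_ge0 : 0 <= (1 - a) ^+ n * (1 + n%:R * a).
  by apply: mulr_ge0; [apply: exprn_ge0 | ]; nra.
have q_le : (1 - a) ^+ n * (1 + n%:R * a) <= expR (- y).
  apply: le_trans (expR_ge1Dx _); rewrite -[1 + - y]/(1 - y).
  by apply: le_prob_at_most_one => //; nra.
rewrite prob_distinctE q_eq; apply: le_trans (lerXn2r k _ _ q_le) _.
- exact: q_ge0.
- exact: expR_ge0.
rewrite -expRM_natl; suff -> : k%:R * - y = - ((k * n.+1 * n)%:R * a ^+ 2 / 4) by [].
by rewrite /y !natrM -natr1; ring.
Qed.
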